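(* Let $\mathcal{C}$ be a d-category and $X$ a $\mathcal{C}$-automaton. A track object $\Gamma$ belongs to $\mathrm{Lang}(X)$ if and only if $\Gamma\cong\widehat{\pi_X\circ\alpha}$ (as $\mathcal{C}$-automata) for some accepting path $\alpha$ in $X$. That is, $\mathrm{Lang}(X)=\{\widehat{\pi_X\circ\alpha}\mid\alpha\text{ accepting path in }X\}$ up to isomorphism.
   Context: A d-category is a small category $\mathcal{C}$ with wide subcategories $\mathcal{C}^+$ (formorphisms) and $\mathcal{C}^-$ (backmorphisms) such that an invertible $\varphi$ is in $\mathcal{C}^+$ iff $\varphi^{-1}\in\mathcal{C}^-$; d-functors preserve both. A $\mathcal{C}$-presheaf is a functor $X:\mathcal{C}^{op}\to\mathbf{Set}$; $\mathsf{E}X$ is its category of elements (objects $(U,x)$, $x\in X[U]$; morphisms $(V,y)\to(U,x)$ the $\varphi:V\to U$ with $X[\varphi](x)=y$), with projection $\pi_X$ and d-structure: a morphism is a for-/backmorphism iff its image under $\pi_X$ is. A $\mathcal{C}$-automaton is a presheaf $X$ with sets $\bot_X,\top_X$ of elements (start, accept); morphisms of automata are presheaf maps preserving them. A linear category is a bipointed d-category isomorphic to a finite (possibly empty) concatenation (gluing $\top$ to $\bot$) of $\mathbf S$ (formorphism $\bot\to\top$), $\mathbf T$ (backmorphism $\top\to\bot$), $\mathbf I$ (inverse pair). A path in a d-category $\mathcal D$ is a d-functor $\omega:\mathcal I\to\mathcal D$ from a linear category; a path in $X$ is a path in $\mathsf{E}X$, accepting if $\alpha(\bot_{\mathcal I})\in\bot_X$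 and $\alpha(\top_{\mathcal I})\in\top_X$. The track object of a path $\omega$ in $\mathcal{C}$ is $\widehat\omega=\operatorname{colim}_{i}\mathcal{C}(-,\omega(i))$ with single start element the image of $\mathrm{id}_{\omega(\bot)}$ and single accept element the image of $\mathrm{id}_{\omega(\top)}$; a track object is an automaton isomorphic to some $\widehat\omega$. $\mathrm{Lang}(X)$ is the class of track objects $\Gamma$ admitting a morphism of $\mathcal{C}$-automata $\Gamma\to X$. *)

From Stdlib Require Import Arith Lia List ProofIrrelevance ClassicalEpsilon
  FunctionalExtensionality PropExtensionality Relation_Operators.
Set Implicit Arguments.
Unset Strict Implicit.

Record Cat := {
  ob : Type;
  hom : ob -> ob -> Type;
  idc : forall a, hom a a;
  cmp : forall a b c, hom b c -> hom a b -> hom a c;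
  cmp_id_l : forall a b (f : hom a b), cmp (idc b) f = f;
  cmp_id_r : forall a b (f : hom a b), cmp f (idc a) = f;
  cmp_assoc : forall a b c d (h : hom c d) (g : hom b c) (f : hom a b),
      cmp h (cmp g f) = cmp (cmp h g) f }.
Arguments idc {_} _.
Arguments cmp {_ _ _ _} _ _.
Arguments hom {_} _ _.

Record DCat := {
  dcat :> Cat;
  fwd : forall a b : ob dcat, hom a b -> Prop;
  bwd : forall a b : ob dcat, hom a b -> Prop;
  fwd_id : forall a, fwd (idc a);
  fwd_cmp : forall a b c (g : hom b c) (f : hom a b),
      fwd g -> fwd f -> fwd (cmp g f);
  bwd_id : forall a, bwd (idc a);
  bwd_cmp : forall a b c (g : hom b c) (f : hom a b),
      bwd g -> bwd f -> bwd (cmp g f);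
  d_inv : forall a b (f : hom a b) (g : hom b a),
      cmp g f = idc a -> cmp f g = idc b -> (fwd f <-> bwd g) }.
Arguments fwd {_ _ _} _.
Arguments bwd {_ _ _} _.

Record Functor (C D : Cat) := {
  fob : ob C -> ob D;
  fmap : forall a b, @hom C a b -> @hom D (fob a) (fob b);
  fmap_id : forall a, fmap (idc a) = idc (fob a);
  fmap_cmp : forall a b c (g : @hom C b c) (f : @hom C a b),
      fmap (cmp g f) = cmp (fmap g) (fmap f) }.
Arguments fob {C D} _ _.
Arguments fmap {C D} _ {a b} _.

Record DFunctor (C D : DCat) := {
  dfun :> Functor C D;
  dfun_fwd : forall a b (f : @hom C a b), fwd f -> fwd (fmap dfun f);
  dfun_bwd : forall a b (f : @hom C a b), bwd f -> bwd (fmap dfun f) }.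

Definition fcomp (C D E : Cat) (G : Functor D E) (F : Functor C D) : Functor C E.
Proof.
  refine {| fob := fun a => fob G (fob F a);
            fmap := fun a b f => fmap G (fmap F f) |}.
  - intro a. rewrite (fmap_id F), (fmap_id G). reflexivity.
  - intros a b c g f. rewrite (fmap_cmp F), (fmap_cmp G). reflexivity.
Defined.

Definition dfcomp (C D E : DCat) (G : DFunctor D E) (F : DFunctor C D) : DFunctor C E.
Proof.
  refine {| dfun := fcomp G F |}.
  - intros a b f H. apply (dfun_fwd G). apply (dfun_fwd F). exact H.
  - intros a b f H. apply (dfun_bwd G). apply (dfun_bwd F). exact H.
Defined.

(* A word over {S, T, I}; the concatenation of the corresponding pieces has
   objects 0..n (n = length of the word), bottom 0, top n.  It is thin: there is
   a (unique) morphism i -> j iff j >= i and all steps in [i,j) are S or I, or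
   j <= i and all steps in [j,i) are T or I.  Formorphisms are those with
   i <= j, backmorphisms those with j <= i. *)
Inductive Step := sS | sT | sI.

Definition fstep (s : Step) : Prop := match s with sS | sI => True | sT => False end.
Definition bstep (s : Step) : Prop := match s with sT | sI => True | sS => False end.

Definition reach (w : list Step) (i j : nat) : Prop :=
  (i <= j /\ forall k, i <= k < j -> fstep (nth k w sI)) \/
  (j <= i /\ forall k, j <= k < i -> bstep (nth k w sI)).

Lemma reach_refl w i : reach w i i.
Proof. left. split; [lia | intros k Hk; lia]. Qed.

Lemma reach_trans w i j k : reach w i j -> reach w j k -> reach w i k.
Proof.
  unfold reach; intros [[H1 F1]|[H1 B1]] [[H2 F2]|[H2 B2]].
  - left; split; [lia|]. intros m Hm. destruct (Nat.lt_ge_cases m j).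
    + apply F1; lia.
    + apply F2; lia.
  - destruct (Nat.le_ge_cases i k).
    + left; split; [lia|]. intros m Hm; apply F1; lia.
    + right; split; [lia|]. intros m Hm; apply B2; lia.
  - destruct (Nat.le_ge_cases i k).
    + left; split; [lia|]. intros m Hm; apply F2; lia.
    + right; split; [lia|]. intros m Hm; apply B1; lia.
  - right; split; [lia|]. intros m Hm. destruct (Nat.lt_ge_cases m j).
    + apply B2; lia.
    + apply B1; lia.
Qed.

Definition LinOb (w : list Step) := {i : nat | i <= length w}.

Definition LinCat (w : list Step) : Cat.
Proof.
  refine {| ob := LinOb w;
            hom := fun a b => reach w (proj1_sig a) (proj1_sig b);
            idc := fun a => reach_refl w (proj1_sig a);
            cmp := fun a b c g f => reach_trans f g |};
  intros; apply proof_irrelevance.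
Defined.

Definition LinD (w : list Step) : DCat.
Proof.
  refine {| dcat := LinCat w;
            fwd := fun a b _ => proj1_sig a <= proj1_sig b;
            bwd := fun a b _ => proj1_sig b <= proj1_sig a |};
  simpl; intros; try lia; tauto.
Defined.

Definition lbot (w : list Step) : ob (LinD w) :=
  exist (fun i => i <= length w) 0 (Nat.le_0_l _).
Definition ltop (w : list Step) : ob (LinD w) :=
  exist (fun i => i <= length w) (length w) (Nat.le_refl _).

Record Path (D : DCat) := { pword : list Step; pfun : DFunctor (LinD pword) D }.
Arguments pword {D} _.
Arguments pfun {D} _.

Definition pbot (D : DCat) (p : Path D) : ob D := fob (pfun p) (lbot (pword p)).
Definition ptop (D : DCat) (p : Path D) : ob D := fob (pfun p) (ltop (pword p)).

Record Presheaf (C : Cat) := {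
  ps : ob C -> Type;
  pact : forall U V, @hom C V U -> ps U -> ps V;
  pact_id : forall U (x : ps U), pact (idc U) x = x;
  pact_cmp : forall U V W (f : @hom C V U) (g : @hom C W V) (x : ps U),
      pact (cmp f g) x = pact g (pact f x) }.
Arguments ps {C} _ _.
Arguments pact {C} _ {U V} _ _.

Definition Elt (C : Cat) (X : Presheaf C) := {U : ob C & ps X U}.

Record Automaton (C : Cat) := {
  apsh :> Presheaf C;
  astart : Elt apsh -> Prop;
  aacc : Elt apsh -> Prop }.
Arguments astart {C} _ _.
Arguments aacc {C} _ _.

Record PMap (C : Cat) (X Y : Presheaf C) := {
  pm : forall U, ps X U -> ps Y U;
  pm_nat : forall U V (f : @hom C V U) (x : ps X U),
      pm (pact X f x) = pact Y f (pm x) }.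
Arguments pm {C X Y} _ _ _.

Definition pm_elt (C : Cat) (X Y : Presheaf C) (m : PMap X Y) (e : Elt X) : Elt Y :=
  existT _ (projT1 e) (pm m (projT1 e) (projT2 e)).

Definition is_amorph (C : Cat) (X Y : Automaton C) (m : PMap X Y) : Prop :=
  (forall e, astart X e -> astart Y (pm_elt m e)) /\
  (forall e, aacc X e -> aacc Y (pm_elt m e)).

Definition aiso (C : Cat) (X Y : Automaton C) : Prop :=
  exists (m : PMap X Y) (m' : PMap Y X),
    is_amorph m /\ is_amorph m' /\
    (forall U x, pm m' U (pm m U x) = x) /\ (forall U y, pm m U (pm m' U y) = y).

Lemma sig_eq_pi (A : Type) (P : A -> Prop) (a b : {x : A | P x}) :
  proj1_sig a = proj1_sig b -> a = b.
Proof.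
  destruct a as [a Ha], b as [b Hb]; simpl; intros ->.
  f_equal; apply proof_irrelevance.
Qed.

Definition ElHom (C : Cat) (X : Presheaf C) (e e' : Elt X) :=
  {phi : @hom C (projT1 e) (projT1 e') | pact X phi (projT2 e') = projT2 e}.

Definition el_id (C : Cat) (X : Presheaf C) (e : Elt X) : ElHom e e :=
  exist (fun phi => pact X phi (projT2 e) = projT2 e) (idc (projT1 e))
        (pact_id _).

Definition el_cmp (C : Cat) (X : Presheaf C) (e1 e2 e3 : Elt X)
  (g : ElHom e2 e3) (f : ElHom e1 e2) : ElHom e1 e3.
Proof.
  exists (cmp (proj1_sig g) (proj1_sig f)).
  rewrite pact_cmp, (proj2_sig g), (proj2_sig f). reflexivity.
Defined.

Definition ElCat (C : Cat) (X : Presheaf C) : Cat.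
Proof.
  refine {| ob := Elt X; hom := @ElHom C X; idc := @el_id C X; cmp := @el_cmp C X |}.
  - intros; apply sig_eq_pi; simpl; apply cmp_id_l.
  - intros; apply sig_eq_pi; simpl; apply cmp_id_r.
  - intros; apply sig_eq_pi; simpl; apply cmp_assoc.
Defined.

Definition EX (C : DCat) (X : Presheaf C) : DCat.
Proof.
  refine {| dcat := ElCat X;
            fwd := fun e e' phi => fwd (proj1_sig phi);
            bwd := fun e e' phi => bwd (proj1_sig phi) |}.
  - intros; apply fwd_id.
  - intros a b c g f Hg Hf; apply (fwd_cmp Hg Hf).
  - intros; apply bwd_id.
  - intros a b c g f Hg Hf; apply (bwd_cmp Hg Hf).
  - intros a b f g H1 H2. apply (d_inv (d:=C)).
    + exact (f_equal (@proj1_sig _ _) H1).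
    + exact (f_equal (@proj1_sig _ _) H2).
Defined.

Definition piF (C : DCat) (X : Presheaf C) : Functor (EX X) C.
Proof.
  refine (@Build_Functor (EX X) C (fun e : Elt X => projT1 e)
            (fun e e' (phi : @ElHom C X e e') => proj1_sig phi) _ _);
  intros; reflexivity.
Defined.

Definition piX (C : DCat) (X : Presheaf C) : DFunctor (EX X) C.
Proof.
  refine (@Build_DFunctor (EX X) C (piF X) _ _); simpl; intros; assumption.
Defined.

Definition ppush (C : DCat) (X : Presheaf C) (alpha : Path (EX X)) : Path C :=
  {| pword := pword alpha; pfun := dfcomp (piX X) (pfun alpha) |}.

Definition accepting (C : DCat) (X : Automaton C) (alpha : Path (EX X)) : Prop :=
  astart X (pbot alpha) /\ aacc X (ptop alpha).

Definition eqv (A : Type) (R : A -> A -> Prop) := clos_refl_sym_trans A R.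
Definition quot (A : Type) (R : A -> A -> Prop) :=
  {P : A -> Prop | exists a, P = eqv R a}.
Definition cls (A : Type) (R : A -> A -> Prop) (a : A) : quot R :=
  exist _ (eqv R a) (ex_intro _ a eq_refl).

Definition qrepr (A : Type) (R : A -> A -> Prop) (q : quot R) : A :=
  proj1_sig (constructive_indefinite_description _ (proj2_sig q)).

Lemma qrepr_spec (A : Type) (R : A -> A -> Prop) (q : quot R) : cls R (qrepr q) = q.
Proof.
  unfold qrepr. destruct (constructive_indefinite_description _ _) as [a Ha].
  simpl. apply sig_eq_pi. simpl. symmetry. exact Ha.
Qed.

Lemma cls_eqv (A : Type) (R : A -> A -> Prop) (a b : A) :
  cls R a = cls R b -> eqv R a b.
Proof.
  intro H. apply (f_equal (@proj1_sig _ _)) in H. simpl in H.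
  assert (Hb : eqv R b b) by apply rst_refl.
  rewrite <- H in Hb. exact Hb.
Qed.

Definition qlift (A B : Type) (R : A -> A -> Prop) (f : A -> B) (q : quot R) : B :=
  f (qrepr q).

Lemma qlift_cls (A B : Type) (R : A -> A -> Prop) (f : A -> B) :
  (forall a b, R a b -> f a = f b) -> forall a, qlift f (cls R a) = f a.
Proof.
  intros Hf a. unfold qlift. pose proof (cls_eqv (qrepr_spec (cls R a))) as H.
  induction H; auto. congruence.
Qed.

Lemma cls_surj (A : Type) (R : A -> A -> Prop) (q : quot R) : exists a, q = cls R a.
Proof. exists (qrepr q). symmetry. apply qrepr_spec. Qed.

Lemma cls_step (A : Type) (R : A -> A -> Prop) (a b : A) : R a b -> cls R a = cls R b.
Proof.
  intro H. apply sig_eq_pi; simpl.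
  apply functional_extensionality; intro x. apply propositional_extensionality.
  split; intro Hx.
  - apply rst_trans with a; [apply rst_sym, rst_step, H | exact Hx].
  - apply rst_trans with b; [apply rst_step, H | exact Hx].
Qed.

(* hat omega = colim_i C(-, omega(i)), computed pointwise in Set:
   at U, the quotient of  sum_i C(U, omega i)  by the equivalence generated by
   (i, f) ~ (j, omega(g) o f)  for g : i -> j in the linear category. *)
Definition TrA (C : DCat) (om : Path C) (U : ob C) :=
  {i : ob (LinD (pword om)) & @hom C U (fob (pfun om) i)}.

Definition TrR (C : DCat) (om : Path C) (U : ob C) (p q : TrA om U) : Prop :=
  exists g : @hom (LinD (pword om)) (projT1 p) (projT1 q),
    projT2 q = cmp (fmap (pfun om) g) (projT2 p).

Definition TrT (C : DCat) (om : Path C) (U : ob C) := quot (@TrR C om U).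

Definition tr_act_rep (C : DCat) (om : Path C) (U V : ob C) (phi : @hom C V U)
  (p : TrA om U) : TrT om V :=
  cls (@TrR C om V) (existT _ (projT1 p) (cmp (projT2 p) phi)).

Lemma tr_act_rep_ok (C : DCat) (om : Path C) (U V : ob C) (phi : @hom C V U) :
  forall p q : TrA om U, TrR p q -> tr_act_rep phi p = tr_act_rep phi q.
Proof.
  intros [i f] [j f'] [g Hg]; simpl in *. unfold tr_act_rep; simpl.
  apply cls_step. exists g; simpl. rewrite Hg. symmetry. apply cmp_assoc.
Qed.

Definition tr_act (C : DCat) (om : Path C) (U V : ob C) (phi : @hom C V U)
  (q : TrT om U) : TrT om V := qlift (tr_act_rep phi) q.

Definition track_psh (C : DCat) (om : Path C) : Presheaf C.
Proof.
  refine {| ps := TrT om; pact := @tr_act C om |}.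
  - intros U q. destruct (cls_surj q) as [[i f] ->].
    unfold tr_act. rewrite qlift_cls by apply tr_act_rep_ok.
    unfold tr_act_rep; simpl. rewrite cmp_id_r. reflexivity.
  - intros U V W f g q. destruct (cls_surj q) as [[i h] ->].
    unfold tr_act. rewrite !qlift_cls by apply tr_act_rep_ok.
    unfold tr_act_rep; simpl. rewrite qlift_cls by apply tr_act_rep_ok.
    unfold tr_act_rep; simpl. rewrite cmp_assoc. reflexivity.
Defined.

Definition tr_elt (C : DCat) (om : Path C) (i : ob (LinD (pword om))) : Elt (track_psh om) :=
  existT (ps (track_psh om)) (fob (pfun om) i)
    (cls (@TrR C om (fob (pfun om) i)) (existT _ i (idc (fob (pfun om) i)))).

Definition track (C : DCat) (om : Path C) : Automaton C :=
  {| apsh := track_psh om;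
     astart := fun e => e = @tr_elt C om (lbot (pword om));
     aacc := fun e => e = @tr_elt C om (ltop (pword om)) |}.

Definition is_track_object (C : DCat) (G : Automaton C) : Prop :=
  exists om : Path C, aiso G (track om).

Definition Lang (C : DCat) (X : Automaton C) (G : Automaton C) : Prop :=
  is_track_object G /\ exists m : PMap G X, is_amorph m.
Arguments accepting {C} X alpha.
Arguments Lang {C} X G.
Arguments ppush {C X} alpha.
Arguments track {C} om.

(* By the Yoneda lemma a presheaf map h from a track object ω̂ to X is
   determined by the images of the generators [id_{ω(i)}]; these images are
   elements of X over ω(i), compatible along the morphisms of the linear
   category, i.e. they form a path α in E X with π_X ∘ α = ω, so that ω̂ is
   literally the track object of π_X ∘ α, and α is accepting when h preserves
   start and accept elements.  Conversely a path α in E X induces the map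
   [f : U → π_X α(i)] ↦ X[f](α(i)) from the track object of π_X ∘ α to X,
   which sends the start and accept generators to α(⊥) and α(⊤). *)
Set Implicit Arguments.

Section AutomatonMorphisms.
Variable C : Cat.

Definition pmcomp (X Y Z : Presheaf C) (g : PMap Y Z) (f : PMap X Y) : PMap X Z.
Proof.
  refine {| pm := fun U x => pm g U (pm f U x) |}.
  intros U V phi x. rewrite (pm_nat f), (pm_nat g). reflexivity.
Defined.

Lemma amorph_comp (X Y Z : Automaton C) (g : PMap Y Z) (f : PMap X Y) :
  is_amorph g -> is_amorph f -> is_amorph (pmcomp g f).
Proof.
  intros [Hg_start Hg_acc] [Hf_start Hf_acc]; split; intros e He.
  - exact (Hg_start _ (Hf_start e He)).
  - exact (Hg_acc _ (Hf_acc e He)).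
Qed.

Lemma aiso_trans (X Y Z : Automaton C) : aiso X Y -> aiso Y Z -> aiso X Z.
Proof.
  intros [f [f' [Hf [Hf' [Hff' Hf'f]]]]] [g [g' [Hg [Hg' [Hgg' Hg'g]]]]].
  exists (pmcomp g f), (pmcomp f' g').
  split; [|split; [|split]].
  - exact (amorph_comp Hg Hf).
  - exact (amorph_comp Hf' Hg').
  - intros U x; simpl. rewrite Hgg'. apply Hff'.
  - intros U z; simpl. rewrite Hf'f. apply Hg'g.
Qed.
End AutomatonMorphisms.

Section TrackObjects.
Variables (C : DCat) (om : Path C).

Lemma tr_act_cls U V (phi : @hom C V U) (i : ob (LinD (pword om)))
    (f : @hom C U (fob (pfun om) i)) :
  tr_act phi (cls (@TrR C om U) (existT _ i f))
  = cls (@TrR C om V) (existT _ i (cmp f phi)).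
Proof. unfold tr_act. rewrite qlift_cls by apply tr_act_rep_ok. reflexivity. Qed.

Lemma tr_elt_nat (i j : ob (LinD (pword om))) (g : @hom (LinD (pword om)) i j) :
  pact (track om) (fmap (pfun om) g) (projT2 (tr_elt j)) = projT2 (tr_elt i).
Proof.
  simpl. rewrite tr_act_cls. symmetry. apply cls_step.
  exists g; simpl. rewrite cmp_id_l, cmp_id_r. reflexivity.
Qed.

Section Lift.
Variables (Y : Presheaf C) (h : PMap (track om) Y).

Definition lift_elt (i : ob (LinD (pword om))) : Elt Y := pm_elt h (tr_elt i).

Definition lift_hom (i j : ob (LinD (pword om))) (g : @hom (LinD (pword om)) i j) :
  ElHom (lift_elt i) (lift_elt j).
Proof.
  exists (fmap (pfun om) g).
  simpl. rewrite <- (pm_nat h). f_equal. exact (tr_elt_nat g).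
Defined.

Definition lift_functor : Functor (LinD (pword om)) (EX Y).
Proof.
  refine (@Build_Functor (LinD (pword om)) (EX Y) lift_elt lift_hom _ _).
  - intros; apply sig_eq_pi; simpl; apply fmap_id.
  - intros; apply sig_eq_pi; exact (fmap_cmp (pfun om) _ _).
Defined.

Definition lift_dfunctor : DFunctor (LinD (pword om)) (EX Y).
Proof.
  refine {| dfun := lift_functor |}; simpl; intros a b f Hf.
  - exact (dfun_fwd (pfun om) Hf).
  - exact (dfun_bwd (pfun om) Hf).
Defined.

Definition lift_path : Path (EX Y) := {| pword := pword om; pfun := lift_dfunctor |}.

(* [π_Y ∘ lift_path] has the objects and morphisms of [om], so both track
   objects are the same quotient; the ascriptions through [TrT] matter, since
   unifying the two automata records directly does not terminate in practice. *)
Definition track_lift_map : PMap (track om) (track (ppush lift_path)).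
Proof.
  refine (@Build_PMap C (track om) (track (ppush lift_path))
            (fun U (x : TrT om U) => x : TrT (ppush lift_path) U) _).
  intros U V f x. change (tr_act f x = tr_act (om := ppush lift_path) f x).
  reflexivity.
Defined.

Definition track_unlift_map : PMap (track (ppush lift_path)) (track om).
Proof.
  refine (@Build_PMap C (track (ppush lift_path)) (track om)
            (fun U (x : TrT (ppush lift_path) U) => x : TrT om U) _).
  intros U V f x. change (tr_act (om := ppush lift_path) f x = tr_act f x).
  reflexivity.
Defined.

Lemma track_lift_iso : aiso (track om) (track (ppush lift_path)).
Proof.
  exists track_lift_map, track_unlift_map.
  split; [|split; [|split]]; try reflexivity; split; intros e ->; reflexivity.
Qed.
End Lift.

Lemma lift_path_accepting (X : Automaton C) (h : PMap (track om) X) :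
  is_amorph h -> accepting X (lift_path h).
Proof.
  intros [Hstart Hacc]; split.
  - exact (Hstart _ eq_refl).
  - exact (Hacc _ eq_refl).
Qed.
End TrackObjects.

Section TrackToPresheaf.
Variables (C : DCat) (X : Presheaf C) (alpha : Path (EX X)).

Definition track_to_rep U (p : TrA (ppush alpha) U) : ps X U :=
  pact X (projT2 p) (projT2 (fob (pfun alpha) (projT1 p))).

Lemma track_to_rep_ok U (p q : TrA (ppush alpha) U) :
  TrR p q -> track_to_rep p = track_to_rep q.
Proof.
  destruct p as [i f], q as [j f']; intros [g Hg]; simpl in *.
  unfold track_to_rep; simpl. rewrite Hg, pact_cmp. f_equal. symmetry. exact (proj2_sig (fmap (pfun alpha) g)).
Qed.

Definition track_to : PMap (track (ppush alpha)) X.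
Proof.
  refine (@Build_PMap C (track (ppush alpha)) X
            (fun U (q : TrT (ppush alpha) U) => qlift (@track_to_rep U) q) _).
  intros U V f q. destruct (cls_surj q) as [[i g] ->]; simpl.
  rewrite tr_act_cls, !(qlift_cls (@track_to_rep_ok _)).
  apply pact_cmp.
Defined.

Lemma track_to_tr_elt (i : ob (LinD (pword alpha))) :
  pm_elt track_to (tr_elt (om := ppush alpha) i) = fob (pfun alpha) i.
Proof.
  unfold pm_elt; simpl. rewrite (qlift_cls (@track_to_rep_ok _)).
  unfold track_to_rep; simpl. rewrite pact_id. symmetry. apply sigT_eta.
Qed.
End TrackToPresheaf.

Lemma track_to_amorph (C : DCat) (X : Automaton C) (alpha : Path (EX X)) :
  accepting X alpha -> is_amorph (track_to alpha).
Proof.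
  intros [Hbot Htop]; split; intros e ->; rewrite track_to_tr_elt; assumption.
Qed.

Theorem corollary8 (C : DCat) (X : Automaton C) (G : Automaton C) :
  is_track_object G ->
  (Lang X G <->
   exists alpha : Path (EX X), accepting X alpha /\ aiso G (track (ppush alpha))).
Proof.
  intro HG. split.
  - intros [_ [m Hm]].
    destruct HG as [om Hiso].
    pose proof Hiso as [_ [f' [_ [Hf' _]]]].
    exists (lift_path (pmcomp m f')). split.
    + exact (lift_path_accepting (amorph_comp Hm Hf')).
    + exact (aiso_trans Hiso (track_lift_iso _)).
  - intros [alpha [Hacc [f [_ [Hf _]]]]].
    split; [exact HG|].
    exists (pmcomp (track_to alpha) f).
    exact (amorph_comp (track_to_amorph Hacc) Hf).
Qed.
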